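(* Let $a,b,c,m>0$ with $0<a<1$ and consider, with bifurcation parameter $k>0$, the system $$\frac{dx}{dt}=bx(1-x-cy),\qquad \frac{dy}{dt}=y\Big(\frac{1}{1+kx}-y-ax-mxy\Big).$$ Let $k^*=\frac1a-1$. Suppose $u(E)<0$ and $m\ne -a^2c+2ac-1$. Then the system undergoes a transcritical bifurcation around the boundary equilibrium $E_1=(1,0)$ at the bifurcation parameter threshold $k_{TR}=k^*$.
   Context: Here $u(x)=A_1x^3+A_2x^2+A_3x+A_4$ with $A_1=km$, $A_2=(-ac-m+1)k+m$, $A_3=-ac-k-m+1$, $A_4=c-1$ (the cubic whose roots in $(0,1)$ give the $x$-coordinates of positive equilibria $(x,(1-x)/c)$), and $E$ denotes the larger real root of $u'(x)$ (assumed to exist). All parameters are positive. *)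

From Stdlib Require Import Reals.
From Coquelicot Require Import Coquelicot.
Open Scope R_scope.

Definition f1 (b c : R) (k x y : R) : R := b * x * (1 - x - c * y).
Definition f2 (a m : R) (k x y : R) : R :=
  y * (1 / (1 + k * x) - y - a * x - m * x * y).

Definition A1 (a c k m : R) : R := k * m.
Definition A2 (a c k m : R) : R := (- a * c - m + 1) * k + m.
Definition A3 (a c k m : R) : R := - a * c - k - m + 1.
Definition A4 (a c k m : R) : R := c - 1.
Definition u (a c k m x : R) : R :=
  A1 a c k m * x ^ 3 + A2 a c k m * x ^ 2 + A3 a c k m * x + A4 a c k m.
Definition du (a c k m x : R) : R :=
  3 * A1 a c k m * x ^ 2 + 2 * A2 a c k m * x + A3 a c k m.

Definition larger_root_du (a c k m E : R) : Prop :=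
  du a c k m E = 0 /\ (forall z, du a c k m z = 0 -> z <= E).

Section VF.
Variables F1 F2 : R -> R -> R -> R.

Definition equilibrium (k x y : R) : Prop := F1 k x y = 0 /\ F2 k x y = 0.

Definition J11 k x y := Derive (fun s => F1 k s y) x.
Definition J12 k x y := Derive (fun s => F1 k x s) y.
Definition J21 k x y := Derive (fun s => F2 k s y) x.
Definition J22 k x y := Derive (fun s => F2 k x s) y.

Definition has_partials (k x y : R) : Prop :=
  ex_derive (fun s => F1 k s y) x /\ ex_derive (fun s => F1 k x s) y /\
  ex_derive (fun s => F2 k s y) x /\ ex_derive (fun s => F2 k x s) y.

Definition trJ k x y := J11 k x y + J22 k x y.
Definition detJ k x y := J11 k x y * J22 k x y - J12 k x y * J21 k x y.

Definition is_sink k x y : Prop :=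
  has_partials k x y /\ trJ k x y < 0 /\ 0 < detJ k x y.
Definition is_saddle k x y : Prop :=
  has_partials k x y /\ detJ k x y < 0.

(* Transcritical bifurcation at the equilibrium (x0,y0) at parameter k0:
   - at k0 the Jacobian has a simple zero eigenvalue (det = 0, tr <> 0);
   - (x0,y0) is an equilibrium for all k near k0, and a second branch of
     equilibria q(k), continuous with q(k0) = (x0,y0), crosses it: near
     (x0,y0) the only equilibria are (x0,y0) and q(k), with q(k) distinct
     from (x0,y0) for k <> k0;
   - the two branches exchange stability when k crosses k0. *)
Definition transcritical_bifurcation (x0 y0 k0 : R) : Prop :=
  has_partials k0 x0 y0 /\ detJ k0 x0 y0 = 0 /\ trJ k0 x0 y0 <> 0 /\
  exists (delta r : R) (q1 q2 : R -> R),
    0 < delta /\ 0 < r /\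
    continuous q1 k0 /\ continuous q2 k0 /\ q1 k0 = x0 /\ q2 k0 = y0 /\
    (forall k, Rabs (k - k0) < delta ->
       equilibrium k x0 y0 /\
       equilibrium k (q1 k) (q2 k) /\
       (q1 k - x0) ^ 2 + (q2 k - y0) ^ 2 < r ^ 2 /\
       (k <> k0 -> (q1 k, q2 k) <> (x0, y0)) /\
       (forall x y, (x - x0) ^ 2 + (y - y0) ^ 2 < r ^ 2 -> equilibrium k x y ->
          (x, y) = (x0, y0) \/ (x, y) = (q1 k, q2 k))) /\
    (((forall k, k0 - delta < k < k0 -> is_sink k x0 y0 /\ is_saddle k (q1 k) (q2 k)) /\
      (forall k, k0 < k < k0 + delta -> is_saddle k x0 y0 /\ is_sink k (q1 k) (q2 k)))
     \/
     ((forall k, k0 - delta < k < k0 -> is_saddle k x0 y0 /\ is_sink k (q1 k) (q2 k)) /\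
      (forall k, k0 < k < k0 + delta -> is_sink k x0 y0 /\ is_saddle k (q1 k) (q2 k)))).

End VF.

(* For every k the point E1 = (1,0) is an equilibrium whose Jacobian is triangular, with
   eigenvalues -b and 1/(1+k) - a; the second one changes sign exactly at k* = 1/a - 1.
   Off the x-axis, equilibria lie on the prey nullcline y = (1-x)/c, where the predator
   equation reduces to u(x) = 0, and u(1) = a c (k* - k).  The condition on m says that
   u'(1) <> 0 at k*, so 1 is a simple root of u there, and a scalar implicit function
   argument yields, for k near k*, a unique root q(k) of u near 1, continuous in k.  At
   (q, (1-q)/c) the Jacobian determinant has the sign of (1-q) u'(q), which, u being
   monotone near 1, is the sign of u(1), i.e. of k* - k: the two branches of equilibria
   cross at k* and exchange stability. *)

From Pilot Require Import Defs.
From Stdlib Require Import Reals Psatz ClassicalEpsilon.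
From Coquelicot Require Import Coquelicot.
Open Scope R_scope.

Lemma continuous_of_lipschitz_at (f : R -> R) (x0 d L : R) :
  0 < d -> 0 <= L ->
  (forall x, Rabs (x - x0) < d -> Rabs (f x - f x0) <= L * Rabs (x - x0)) ->
  continuous f x0.
Proof.
  intros Hd HL Hlip. apply filterlim_locally. intros eps.
  assert (Hr : 0 < Rmin d (eps / (L + 1))).
  { apply Rmin_pos; [lra | apply Rdiv_lt_0_compat; [apply cond_pos | lra]]. }
  exists (mkposreal _ Hr). intros x Hx.
  change (Rabs (x - x0) < Rmin d (eps / (L + 1))) in Hx.
  change (Rabs (f x - f x0) < eps).
  assert (Hxd : Rabs (x - x0) < d) by (eapply Rlt_le_trans; [exact Hx | apply Rmin_l]).
  assert (Hsmall : Rabs (x - x0) * (L + 1) < eps).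
  { apply Rlt_div_r; [lra|]. eapply Rlt_le_trans; [exact Hx | apply Rmin_r]. }
  pose proof (Rabs_pos (x - x0)). specialize (Hlip x Hxd). nra.
Qed.

Lemma locally_2d_pos (f : R -> R -> R) (x y : R) :
  continuity_2d_pt f x y -> 0 < f x y -> locally_2d (fun u v => 0 < f u v) x y.
Proof.
  intros Hf Hpos. destruct (Hf (mkposreal _ Hpos)) as [delta Hdelta].
  exists delta. intros u v Hu Hv. specialize (Hdelta u v Hu Hv).
  apply Rabs_def2 in Hdelta. simpl in Hdelta. lra.
Qed.

Lemma continuity_2d_pt_pow (f : R -> R -> R) (n : nat) (x y : R) :
  continuity_2d_pt f x y -> continuity_2d_pt (fun u v => f u v ^ n) x y.
Proof.
  intros Hf. induction n as [|n IH]; simpl.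
  - apply continuity_2d_pt_const.
  - exact (continuity_2d_pt_mult _ _ _ _ Hf IH).
Qed.

Ltac solve_continuity_2d :=
  repeat first
    [ apply continuity_2d_pt_plus | apply continuity_2d_pt_minus
    | apply continuity_2d_pt_mult | apply continuity_2d_pt_opp
    | apply continuity_2d_pt_pow
    | apply continuity_2d_pt_id1 | apply continuity_2d_pt_id2
    | apply continuity_2d_pt_const ].

Section ImplicitBranch.

Variables (h dh : R -> R -> R) (k0 x0 d sigma L rho : R).
Hypothesis h_derive : forall k x, is_derive (h k) x (dh k x).
Hypothesis dh_gt :
  forall k x, Rabs (k - k0) < d -> Rabs (x - x0) < d -> sigma < dh k x.
Hypothesis h_base : forall k, Rabs (h k x0) <= L * Rabs (k - k0).
Hypotheses (sigma_pos : 0 < sigma) (L_ge0 : 0 <= L) (rho_pos : 0 < rho) (rho_lt : rho < d).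

Lemma h_continuous k : continuity (h k).
Proof.
  intros x. apply continuity_pt_filterlim, (ex_derive_continuous (h k)).
  exists (dh k x). apply h_derive.
Qed.

Lemma h_strongly_monotone k x1 x2 :
  Rabs (k - k0) < d -> Rabs (x1 - x0) < d -> Rabs (x2 - x0) < d ->
  sigma * (x2 - x1) ^ 2 <= (x2 - x1) * (h k x2 - h k x1).
Proof.
  intros Hk H1 H2.
  assert (Hincr : forall y1 y2, Rabs (y1 - x0) < d -> Rabs (y2 - x0) < d -> y1 < y2 ->
            sigma * (y2 - y1) < h k y2 - h k y1).
  { intros y1 y2 Hy1 Hy2 Hlt.
    apply Rabs_def2 in Hy1, Hy2.
    assert (Hmono := incr_function (fun x => h k x - sigma * x) (x0 - d) (x0 + d)
                       (fun x => dh k x - sigma)).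
    simpl in Hmono.
    assert (h k y1 - sigma * y1 < h k y2 - sigma * y2); [|lra].
    apply Hmono; try lra.
    - intros x Hx1 Hx2. apply (is_derive_minus (h k) (fun x => sigma * x)); [apply h_derive|].
      auto_derive; [exact I | ring].
    - intros x Hx1 Hx2. assert (sigma < dh k x); [|lra].
      apply dh_gt; [exact Hk | apply Rabs_def1; lra]. }
  destruct (Rtotal_order x1 x2) as [Hlt | [-> | Hgt]].
  - specialize (Hincr x1 x2 H1 H2 Hlt). nra.
  - lra.
  - specialize (Hincr x2 x1 H2 H1 Hgt). nra.
Qed.

Definition branch_radius := Rmin d (sigma * rho / (L + 1)).

(* Away from [k0] the value of [branch] is unspecified: only [k] within
   [branch_radius] of [k0] are ever used. *)
Definition branch (k : R) : R :=
  epsilon (inhabits x0) (fun x => Rabs (x - x0) <= rho /\ h k x = 0).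

Lemma branch_radius_pos : 0 < branch_radius.
Proof. apply Rmin_pos; [lra | apply Rdiv_lt_0_compat; nra]. Qed.

Lemma branch_radius_le : branch_radius <= d.
Proof. apply Rmin_l. Qed.

Lemma branch_exists k :
  Rabs (k - k0) < branch_radius -> exists x, Rabs (x - x0) <= rho /\ h k x = 0.
Proof.
  intros Hk.
  assert (Hkd : Rabs (k - k0) < d) by (pose proof branch_radius_le; lra).
  assert (Hbase : Rabs (h k x0) < sigma * rho).
  { assert (Hk' : Rabs (k - k0) * (L + 1) < sigma * rho).
    { apply Rlt_div_r; [lra|]. eapply Rlt_le_trans; [exact Hk | apply Rmin_r]. }
    pose proof (h_base k). pose proof (Rabs_pos (k - k0)). nra. }
  apply Rabs_def2 in Hbase.
  assert (Hx0 : Rabs (x0 - x0) < d) by (rewrite Rminus_diag, Rabs_R0; lra).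
  assert (Hup : Rabs (x0 + rho - x0) < d)
    by (replace (x0 + rho - x0) with rho by ring; rewrite Rabs_pos_eq; lra).
  assert (Hdown : Rabs (x0 - rho - x0) < d)
    by (replace (x0 - rho - x0) with (- rho) by ring; rewrite Rabs_Ropp, Rabs_pos_eq; lra).
  pose proof (h_strongly_monotone k x0 (x0 + rho) Hkd Hx0 Hup) as Hright.
  pose proof (h_strongly_monotone k (x0 - rho) x0 Hkd Hdown Hx0) as Hleft.
  replace (x0 + rho - x0) with rho in Hright by ring.
  replace (x0 - (x0 - rho)) with rho in Hleft by ring.
  destruct (IVT (h k) (x0 - rho) (x0 + rho) (h_continuous k)) as [x [Hx Hroot]];
    [lra | nra | nra |].
  exists x. split; [apply Rabs_le; lra | exact Hroot].
Qed.

Lemma branch_spec k :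
  Rabs (k - k0) < branch_radius -> Rabs (branch k - x0) <= rho /\ h k (branch k) = 0.
Proof. intros Hk. unfold branch. apply epsilon_spec, branch_exists, Hk. Qed.

Lemma branch_near k :
  Rabs (k - k0) < branch_radius -> Rabs (branch k - x0) < d.
Proof. intros Hk. destruct (branch_spec k Hk) as [Hq _]. lra. Qed.

Lemma branch_unique k x :
  Rabs (k - k0) < branch_radius -> Rabs (x - x0) < d -> h k x = 0 -> x = branch k.
Proof.
  intros Hk Hx Hroot. destruct (branch_spec k Hk) as [_ Hq].
  assert (Hkd : Rabs (k - k0) < d) by (pose proof branch_radius_le; lra).
  pose proof (h_strongly_monotone k x (branch k) Hkd Hx (branch_near k Hk)) as Hincr.
  rewrite Hroot, Hq in Hincr.
  assert (Hsq : (branch k - x) * (branch k - x) <= 0) by nra.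
  nra.
Qed.

Lemma branch_offset k :
  Rabs (k - k0) < branch_radius ->
  sigma * (branch k - x0) ^ 2 <= (x0 - branch k) * h k x0.
Proof.
  intros Hk. destruct (branch_spec k Hk) as [_ Hq].
  assert (Hkd : Rabs (k - k0) < d) by (pose proof branch_radius_le; lra).
  assert (Hx0 : Rabs (x0 - x0) < d) by (rewrite Rminus_diag, Rabs_R0; lra).
  pose proof (h_strongly_monotone k (branch k) x0 Hkd (branch_near k Hk) Hx0) as Hincr.
  rewrite Hq in Hincr. replace ((x0 - branch k) ^ 2) with ((branch k - x0) ^ 2) in Hincr by ring.
  lra.
Qed.

Lemma branch_lipschitz k :
  Rabs (k - k0) < branch_radius -> sigma * Rabs (branch k - x0) <= L * Rabs (k - k0).
Proof.
  intros Hk. pose proof (branch_offset k Hk) as Hoff. pose proof (h_base k) as Hb.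
  assert (Hsq : (branch k - x0) ^ 2 = Rabs (branch k - x0) * Rabs (branch k - x0))
    by (rewrite <- (pow2_abs (branch k - x0)); ring).
  assert (Hprod : (x0 - branch k) * h k x0 <= Rabs (branch k - x0) * Rabs (h k x0)).
  { rewrite <- Rabs_mult. eapply Rle_trans; [apply Rle_abs|].
    rewrite <- Rabs_Ropp. right. f_equal. ring. }
  destruct (Rle_lt_or_eq_dec 0 (Rabs (branch k - x0)) (Rabs_pos _)) as [Hpos | Hzero].
  - apply (Rmult_le_reg_r (Rabs (branch k - x0))); [exact Hpos|]. nra.
  - rewrite <- Hzero. pose proof (Rabs_pos (k - k0)). nra.
Qed.

Lemma branch_base : branch k0 = x0.
Proof.
  assert (Hk : Rabs (k0 - k0) < branch_radius)
    by (rewrite Rminus_diag, Rabs_R0; apply branch_radius_pos).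
  pose proof (branch_lipschitz k0 Hk) as Hlip.
  rewrite Rminus_diag, Rabs_R0, Rmult_0_r in Hlip.
  assert (Hzero : Rabs (branch k0 - x0) = 0)
    by (pose proof (Rabs_pos (branch k0 - x0)); nra).
  apply Rabs_eq_0 in Hzero. lra.
Qed.

Lemma branch_continuous : continuous branch k0.
Proof.
  apply (continuous_of_lipschitz_at branch k0 branch_radius (L / sigma)).
  - apply branch_radius_pos.
  - apply Rdiv_le_0_compat; lra.
  - intros k Hk. rewrite branch_base.
    apply (Rmult_le_reg_l sigma); [exact sigma_pos|].
    replace (sigma * (L / sigma * Rabs (k - k0))) with (L * Rabs (k - k0)) by (field; lra).
    apply branch_lipschitz, Hk.
Qed.

Lemma implicit_branch :
  exists (delta : R) (q : R -> R),
    0 < delta <= d /\ q k0 = x0 /\ continuous q k0 /\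
    forall k, Rabs (k - k0) < delta ->
      Rabs (q k - x0) <= rho /\ h k (q k) = 0 /\
      sigma * (q k - x0) ^ 2 <= (x0 - q k) * h k x0 /\
      (forall x, Rabs (x - x0) < d -> h k x = 0 -> x = q k).
Proof.
  exists branch_radius, branch.
  split; [split; [apply branch_radius_pos | apply branch_radius_le]|].
  split; [apply branch_base|]. split; [apply branch_continuous|].
  intros k Hk. destruct (branch_spec k Hk) as [Hnear Hroot].
  repeat split; [exact Hnear | exact Hroot | apply branch_offset, Hk |].
  intros x Hx Hx0. apply branch_unique; assumption.
Qed.

End ImplicitBranch.

Section Model.

Variables a b c m : R.
Hypotheses (a_pos : 0 < a) (b_pos : 0 < b) (c_pos : 0 < c).

Lemma model_jacobian k x y : 1 + k * x <> 0 ->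
  has_partials (f1 b c) (f2 a m) k x y /\
  J11 (f1 b c) k x y = b * (1 - x - c * y) - b * x /\
  J12 (f1 b c) k x y = - (b * x * c) /\
  J21 (f2 a m) k x y = y * (- (k / (1 + k * x) ^ 2) - a - m * y) /\
  J22 (f2 a m) k x y = (1 / (1 + k * x) - y - a * x - m * x * y) - y * (1 + m * x).
Proof.
  intros Hk.
  assert (D11 : is_derive (fun s => f1 b c k s y) x (b * (1 - x - c * y) - b * x))
    by (unfold f1; auto_derive; [exact I | ring]).
  assert (D12 : is_derive (fun s => f1 b c k x s) y (- (b * x * c)))
    by (unfold f1; auto_derive; [exact I | ring]).
  assert (D21 : is_derive (fun s => f2 a m k s y) x (y * (- (k / (1 + k * x) ^ 2) - a - m * y)))
    by (unfold f2; auto_derive; [auto | field; exact Hk]).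
  assert (D22 : is_derive (fun s => f2 a m k x s) y
                  ((1 / (1 + k * x) - y - a * x - m * x * y) - y * (1 + m * x)))
    by (unfold f2; auto_derive; [auto | field; exact Hk]).
  unfold has_partials, J11, J12, J21, J22.
  repeat split; try (eexists; eassumption); apply is_derive_unique; assumption.
Qed.

Lemma u_derive k x : is_derive (u a c k m) x (du a c k m x).
Proof. unfold u, du, Defs.A1, A2, A3, A4. auto_derive; [exact I | ring]. Qed.

Lemma u_at_1 k : u a c k m 1 = a * c * (1 / a - 1 - k).
Proof. unfold u, Defs.A1, A2, A3, A4. field. lra. Qed.

Lemma du_at_transcritical_point :
  a * du a c (1 / a - 1) m 1 = 1 + m + a ^ 2 * c - 2 * a * c.
Proof. unfold du, Defs.A1, A2, A3. field. lra. Qed.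

Lemma predator_growth_on_prey_nullcline k x : 1 + k * x <> 0 ->
  1 / (1 + k * x) - (1 - x) / c - a * x - m * x * ((1 - x) / c)
  = u a c k m x / (c * (1 + k * x)).
Proof. intros Hk. unfold u, Defs.A1, A2, A3, A4. field. split; lra. Qed.

Lemma E1_equilibrium k : equilibrium (f1 b c) (f2 a m) k 1 0.
Proof. unfold equilibrium, f1, f2. split; ring. Qed.

Lemma nullcline_equilibrium k x : 1 + k * x <> 0 -> u a c k m x = 0 ->
  equilibrium (f1 b c) (f2 a m) k x ((1 - x) / c).
Proof.
  intros Hk Hu. unfold equilibrium, f1, f2. split.
  - field. lra.
  - rewrite predator_growth_on_prey_nullcline, Hu by exact Hk. unfold Rdiv. ring.
Qed.

Lemma equilibrium_cases k x y : 0 < x -> 1 + k * x <> 0 ->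
  equilibrium (f1 b c) (f2 a m) k x y ->
  (x, y) = (1, 0) \/ (y = (1 - x) / c /\ u a c k m x = 0).
Proof.
  intros Hx Hk [E1 E2]. unfold f1, f2 in E1, E2.
  assert (Hy : y = (1 - x) / c).
  { apply Rmult_integral in E1 as [E1 | E1]; [nra|].
    replace (1 - x) with (c * y) by lra. field. lra. }
  apply Rmult_integral in E2 as [-> | E2].
  - left. assert (Hx1 : 1 - x = c * ((1 - x) / c)) by (field; lra).
    rewrite <- Hy, Rmult_0_r in Hx1. f_equal. lra.
  - right. split; [exact Hy|]. subst y.
    rewrite predator_growth_on_prey_nullcline in E2 by exact Hk.
    unfold Rdiv in E2. apply Rmult_integral in E2 as [E2 | E2]; [exact E2|].
    exfalso. revert E2. apply Rinv_neq_0_compat. apply Rmult_integral_contrapositive; lra.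
Qed.

Lemma critical_parameter_gt_neg1 : -1 < 1 / a - 1.
Proof. assert (0 < 1 / a) by (apply Rdiv_lt_0_compat; lra). lra. Qed.

Lemma E1_jacobian k : 0 < 1 + k ->
  has_partials (f1 b c) (f2 a m) k 1 0 /\
  trJ (f1 b c) (f2 a m) k 1 0 = - b + a * (1 / a - 1 - k) / (1 + k) /\
  detJ (f1 b c) (f2 a m) k 1 0 = - b * (a * (1 / a - 1 - k) / (1 + k)).
Proof.
  intros Hk. unfold trJ, detJ.
  destruct (model_jacobian k 1 0) as (HP & -> & -> & -> & ->); [lra|].
  split; [exact HP|]. split; field; lra.
Qed.

Lemma E1_nonhyperbolic :
  has_partials (f1 b c) (f2 a m) (1 / a - 1) 1 0 /\
  detJ (f1 b c) (f2 a m) (1 / a - 1) 1 0 = 0 /\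
  trJ (f1 b c) (f2 a m) (1 / a - 1) 1 0 <> 0.
Proof.
  destruct (E1_jacobian (1 / a - 1)) as (HP & Htr & Hdet);
    [pose proof critical_parameter_gt_neg1; lra|].
  rewrite Htr, Hdet, Rminus_diag. unfold Rdiv. split; [exact HP|]. split; [ring | lra].
Qed.

Lemma E1_saddle k : -1 < k < 1 / a - 1 -> is_saddle (f1 b c) (f2 a m) k 1 0.
Proof.
  intros Hk. destruct (E1_jacobian k) as (HP & _ & Hdet); [lra|].
  split; [exact HP|]. rewrite Hdet.
  assert (0 < a * (1 / a - 1 - k) / (1 + k)) by (apply Rdiv_lt_0_compat; nra). nra.
Qed.

Lemma E1_sink k : 1 / a - 1 < k -> is_sink (f1 b c) (f2 a m) k 1 0.
Proof.
  intros Hk. assert (Hk1 : 0 < 1 + k) by (pose proof critical_parameter_gt_neg1; lra).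
  destruct (E1_jacobian k Hk1) as (HP & Htr & Hdet).
  split; [exact HP|]. rewrite Htr, Hdet.
  assert (a * (1 / a - 1 - k) / (1 + k) < 0).
  { unfold Rdiv. apply Rmult_neg_pos; [nra | apply Rinv_0_lt_compat, Hk1]. }
  split; nra.
Qed.

Lemma nullcline_jacobian k x : 1 + k * x <> 0 -> u a c k m x = 0 ->
  let y := (1 - x) / c in
  has_partials (f1 b c) (f2 a m) k x y /\
  trJ (f1 b c) (f2 a m) k x y = - (b * x) - y * (1 + m * x) /\
  detJ (f1 b c) (f2 a m) k x y = b * x * y * du a c k m x / (1 + k * x).
Proof.
  intros Hk Hu y. unfold trJ, detJ.
  destruct (model_jacobian k x y) as (HP & -> & -> & -> & ->); [exact Hk|].
  unfold y. rewrite predator_growth_on_prey_nullcline, Hu by exact Hk.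
  split; [exact HP|]. split; [field; lra|].
  transitivity (b * x * ((1 - x) / c) * du a c k m x / (1 + k * x)
                - b * x * ((1 - x) / c) * k * u a c k m x / (1 + k * x) ^ 2).
  - unfold u, du, Defs.A1, A2, A3, A4. field. lra.
  - rewrite Hu. field. split; [lra | exact Hk].
Qed.

Lemma nullcline_sink k x :
  0 < x -> 0 < 1 + k * x -> u a c k m x = 0 ->
  0 < b * x + (1 - x) / c * (1 + m * x) -> 0 < (1 - x) * du a c k m x ->
  is_sink (f1 b c) (f2 a m) k x ((1 - x) / c).
Proof.
  intros Hx Hk Hu Htr_pos Hdet_pos.
  destruct (nullcline_jacobian k x) as (HP & Htr & Hdet); [lra | exact Hu|].
  split; [exact HP|]. rewrite Htr, Hdet. split; [lra|].
  replace (b * x * ((1 - x) / c) * du a c k m x / (1 + k * x))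
    with (b * x * ((1 - x) * du a c k m x) / (c * (1 + k * x))) by (field; lra).
  apply Rdiv_lt_0_compat; [|nra]. apply Rmult_lt_0_compat; [nra | exact Hdet_pos].
Qed.

Lemma nullcline_saddle k x :
  0 < x -> 0 < 1 + k * x -> u a c k m x = 0 -> (1 - x) * du a c k m x < 0 ->
  is_saddle (f1 b c) (f2 a m) k x ((1 - x) / c).
Proof.
  intros Hx Hk Hu Hdet_neg.
  destruct (nullcline_jacobian k x) as (HP & _ & Hdet); [lra | exact Hu|].
  split; [exact HP|]. rewrite Hdet.
  replace (b * x * ((1 - x) / c) * du a c k m x / (1 + k * x))
    with (- (b * x * (- ((1 - x) * du a c k m x)) / (c * (1 + k * x)))) by (field; lra).
  apply Ropp_lt_gt_0_contravar, Rdiv_lt_0_compat; [|nra].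
  apply Rmult_lt_0_compat; nra.
Qed.

Lemma transcritical_point_neighbourhood e :
  e ^ 2 / 2 < e * du a c (1 / a - 1) m 1 ->
  locally_2d (fun k x => 0 < 1 + k * x /\ 0 < x /\
                         0 < b * x + (1 - x) / c * (1 + m * x) /\
                         e ^ 2 / 2 < e * du a c k m x) (1 / a - 1) 1.
Proof.
  intros He. pose proof critical_parameter_gt_neg1.
  repeat apply locally_2d_and.
  - apply (locally_2d_pos (fun k x => 1 + k * x)); [solve_continuity_2d | lra].
  - apply (locally_2d_pos (fun k x => x)); [solve_continuity_2d | lra].
  - apply (locally_2d_pos (fun k x => b * x + (1 - x) / c * (1 + m * x)));
      [unfold Rdiv; solve_continuity_2d | cbv beta; unfold Rdiv; nra].
  - apply (locally_2d_impl (fun k x => 0 < e * du a c k m x - e ^ 2 / 2)).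
    + apply locally_2d_forall. intros. lra.
    + apply (locally_2d_pos (fun k x => e * du a c k m x - e ^ 2 / 2)).
      * unfold du, Defs.A1, A2, A3, Rdiv. solve_continuity_2d.
      * cbv beta. lra.
Qed.

Lemma nullcline_point_in_ball d x :
  0 < d -> Rabs (x - 1) <= d * c / (1 + c) -> (x - 1) ^ 2 + ((1 - x) / c - 0) ^ 2 < d ^ 2.
Proof.
  intros Hd Hx.
  replace ((x - 1) ^ 2 + ((1 - x) / c - 0) ^ 2) with (Rabs (x - 1) ^ 2 * (1 + c ^ 2) / c ^ 2)
    by (rewrite pow2_abs; field; lra).
  apply Rlt_div_l; [nra|].
  apply Rle_div_r in Hx; [|lra].
  set (t := Rabs (x - 1)) in *. assert (Ht : 0 <= t) by apply Rabs_pos.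
  assert (Hsq : (t * (1 + c)) ^ 2 <= (d * c) ^ 2) by (apply pow_incr; nra).
  assert (t ^ 2 * (1 + c ^ 2) <= (t * (1 + c)) ^ 2) by nra.
  assert (0 < (d * c) ^ 2) by (apply pow2_gt_0; nra).
  destruct (Req_dec t 0) as [-> | Hne]; [nra|].
  assert (0 < t ^ 2 * c) by (apply Rmult_lt_0_compat; [apply pow2_gt_0|]; lra).
  nra.
Qed.

Lemma branch_orientation (e k x : R) :
  e ^ 2 / 2 < e * du a c k m x ->
  e ^ 2 / 2 * (x - 1) ^ 2 <= (1 - x) * (e * u a c k m 1) ->
  x <> 1 -> 0 < (1 - x) * du a c k m x * (1 / a - 1 - k).
Proof.
  intros Hdu Hoff Hx. rewrite u_at_1 in Hoff. set (s := 1 / a - 1 - k) in *. clearbody s.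
  assert (He : e <> 0) by (intros ->; lra).
  assert (Hsq : 0 < (x - 1) ^ 2) by (apply pow2_gt_0; lra).
  assert (He2 : 0 < e ^ 2) by (apply pow2_gt_0, He).
  assert (Hside : 0 < (1 - x) * e * s).
  { assert (0 < e ^ 2 * (x - 1) ^ 2) by (apply Rmult_lt_0_compat; assumption).
    assert (0 < a * c * ((1 - x) * e * s)) by lra.
    assert (0 < a * c) by nra. nra. }
  assert (0 < e ^ 2 * ((1 - x) * du a c k m x * s)) by nra.
  nra.
Qed.

Section BranchNearE1.

Variables (e d delta : R) (q : R -> R).
Hypothesis d_pos : 0 < d.
Hypothesis delta_le_d : delta <= d.
Hypothesis near_E1 : forall k x, Rabs (k - (1 / a - 1)) < d -> Rabs (x - 1) < d ->
  0 < 1 + k * x /\ 0 < x /\ 0 < b * x + (1 - x) / c * (1 + m * x) /\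
  e ^ 2 / 2 < e * du a c k m x.
Hypothesis q_branch : forall k, Rabs (k - (1 / a - 1)) < delta ->
  Rabs (q k - 1) <= d * c / (1 + c) /\ u a c k m (q k) = 0 /\
  e ^ 2 / 2 * (q k - 1) ^ 2 <= (1 - q k) * (e * u a c k m 1) /\
  (forall x, Rabs (x - 1) < d -> u a c k m x = 0 -> x = q k).

Lemma near_E1_branch k : Rabs (k - (1 / a - 1)) < delta ->
  0 < 1 + k * q k /\ 0 < q k /\ 0 < b * q k + (1 - q k) / c * (1 + m * q k) /\
  e ^ 2 / 2 < e * du a c k m (q k).
Proof.
  intros Hk. destruct (q_branch k Hk) as (Hq & _).
  apply near_E1; [lra|]. assert (d * c / (1 + c) < d); [|lra].
  apply Rlt_div_l; nra.
Qed.

Lemma branch_off_E1 k : Rabs (k - (1 / a - 1)) < delta -> k <> 1 / a - 1 -> q k <> 1.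
Proof.
  intros Hk Hne Hq1. destruct (q_branch k Hk) as (_ & Hu & _).
  rewrite Hq1, u_at_1 in Hu. apply Hne.
  assert (Hac : a * c <> 0) by nra.
  apply Rmult_integral in Hu as [Hu | Hu]; [contradiction | lra].
Qed.

Lemma equilibria_near_E1 k x y : Rabs (k - (1 / a - 1)) < delta ->
  (x - 1) ^ 2 + (y - 0) ^ 2 < d ^ 2 -> equilibrium (f1 b c) (f2 a m) k x y ->
  (x, y) = (1, 0) \/ (x, y) = (q k, (1 - q k) / c).
Proof.
  intros Hk Hball Heq.
  assert (Hx : Rabs (x - 1) < d).
  { pose proof (pow2_ge_0 (y - 0)). apply Rabs_def1; nra. }
  destruct (near_E1 k x) as (Hkx & Hx_pos & _); [lra | exact Hx |].
  destruct (equilibrium_cases k x y Hx_pos ltac:(lra) Heq) as [HE1 | [Hy Hu]];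
    [left; exact HE1 | right].
  destruct (q_branch k Hk) as (_ & _ & _ & Huniq).
  rewrite Hy, (Huniq x Hx Hu). reflexivity.
Qed.

Lemma stability_below k : 1 / a - 1 - delta < k < 1 / a - 1 ->
  is_saddle (f1 b c) (f2 a m) k 1 0 /\ is_sink (f1 b c) (f2 a m) k (q k) ((1 - q k) / c).
Proof.
  intros Hk. assert (Hkd : Rabs (k - (1 / a - 1)) < delta) by (apply Rabs_def1; lra).
  destruct (near_E1 k 1) as (Hk1 & _); [lra | rewrite Rminus_diag, Rabs_R0; lra |].
  destruct (near_E1_branch k Hkd) as (Hkq & Hq & Htr & Hdu).
  destruct (q_branch k Hkd) as (_ & Hu & Hoff & _).
  split; [apply E1_saddle; lra|].
  apply nullcline_sink; try assumption.
  pose proof (branch_orientation e k (q k) Hdu Hoff (branch_off_E1 k Hkd ltac:(lra))).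
  assert (0 < 1 / a - 1 - k) by lra. nra.
Qed.

Lemma stability_above k : 1 / a - 1 < k < 1 / a - 1 + delta ->
  is_sink (f1 b c) (f2 a m) k 1 0 /\ is_saddle (f1 b c) (f2 a m) k (q k) ((1 - q k) / c).
Proof.
  intros Hk. assert (Hkd : Rabs (k - (1 / a - 1)) < delta) by (apply Rabs_def1; lra).
  destruct (near_E1_branch k Hkd) as (Hkq & Hq & _ & Hdu).
  destruct (q_branch k Hkd) as (_ & Hu & Hoff & _).
  split; [apply E1_sink; lra|].
  apply nullcline_saddle; try assumption.
  pose proof (branch_orientation e k (q k) Hdu Hoff (branch_off_E1 k Hkd ltac:(lra))).
  assert (1 / a - 1 - k < 0) by lra. nra.
Qed.

Hypotheses (delta_pos : 0 < delta) (q_base : q (1 / a - 1) = 1)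
  (q_continuous : continuous q (1 / a - 1)).

Lemma transcritical_of_branch :
  transcritical_bifurcation (f1 b c) (f2 a m) 1 0 (1 / a - 1).
Proof.
  destruct E1_nonhyperbolic as (HP & Hdet & Htr).
  split; [exact HP|]. split; [exact Hdet|]. split; [exact Htr|].
  exists delta, d, q, (fun k => (1 - q k) / c). cbv beta.
  split; [exact delta_pos|]. split; [exact d_pos|]. split; [exact q_continuous|].
  split.
  { apply (continuous_comp q (fun x => (1 - x) / c)); [exact q_continuous|].
    apply (ex_derive_continuous (fun x => (1 - x) / c)). auto_derive. lra. }
  split; [exact q_base|]. split; [rewrite q_base; field; lra|].
  split.
  - intros k Hk.
    destruct (q_branch k Hk) as (Hq & Hu & _).
    destruct (near_E1_branch k Hk) as (Hkq & _).
    split; [apply E1_equilibrium|].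
    split; [apply nullcline_equilibrium; [lra | exact Hu]|].
    split; [apply nullcline_point_in_ball; assumption|].
    split; [intros Hne Heq; injection Heq as Hq1 _; exact (branch_off_E1 k Hk Hne Hq1)|].
    intros x y. apply equilibria_near_E1, Hk.
  - right. split; [apply stability_below | apply stability_above].
Qed.

End BranchNearE1.

Lemma transcritical_at_E1 : du a c (1 / a - 1) m 1 <> 0 ->
  transcritical_bifurcation (f1 b c) (f2 a m) 1 0 (1 / a - 1).
Proof.
  intros He. remember (du a c (1 / a - 1) m 1) as e eqn:He_def.
  assert (He2 : 0 < e ^ 2) by (apply pow2_gt_0, He).
  destruct (transcritical_point_neighbourhood e) as [d Hnear]; [rewrite <- He_def; nra|].
  assert (Hd : 0 < d) by apply cond_pos.
  assert (Hrho : 0 < d * c / (1 + c) < d).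
  { split; [apply Rdiv_lt_0_compat; nra | apply Rlt_div_l; nra]. }
  (* Scaling u by its slope e at the simple root makes the branch equation increasing
     near x = 1, whatever the sign of e. *)
  destruct (implicit_branch (fun k x => e * u a c k m x) (fun k x => e * du a c k m x)
              (1 / a - 1) 1 d (e ^ 2 / 2) (Rabs e * (a * c)) (d * c / (1 + c)))
    as (delta & q & [Hdelta Hdelta_d] & Hbase & Hcont & Hq).
  - intros k x. apply is_derive_scal, u_derive.
  - intros k x Hk Hx. apply (Hnear k x Hk Hx).
  - intros k. rewrite u_at_1, Rabs_mult, Rabs_mult, (Rabs_pos_eq (a * c)) by nra.
    rewrite (Rabs_minus_sym (1 / a - 1) k). right. ring.
  - lra.
  - apply Rmult_le_pos; [apply Rabs_pos | nra].
  - apply Hrho.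
  - apply Hrho.
  - apply (transcritical_of_branch e d delta q Hd Hdelta_d); try assumption.
    intros k Hk. destruct (Hq k Hk) as (Hqk & Hroot & Hoff & Huniq).
    assert (Hu : forall x, e * u a c k m x = 0 -> u a c k m x = 0).
    { intros x Hx. apply Rmult_integral in Hx as [Hx | Hx]; [contradiction | exact Hx]. }
    split; [exact Hqk|]. split; [apply Hu, Hroot|]. split; [exact Hoff|].
    intros x Hx Hux. apply Huniq; [exact Hx | rewrite Hux; ring].
Qed.

End Model.

Theorem theorem8 (a b c m : R) :
  0 < a < 1 -> 0 < b -> 0 < c -> 0 < m ->
  (exists E, larger_root_du a c (1 / a - 1) m E /\ u a c (1 / a - 1) m E < 0) ->
  m <> - a ^ 2 * c + 2 * a * c - 1 ->
  transcritical_bifurcation (f1 b c) (f2 a m) 1 0 (1 / a - 1).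
Proof.
  intros Ha Hb Hc _ _ Hsimple.
  apply transcritical_at_E1; try lra.
  intros Hdu. apply Hsimple.
  pose proof (du_at_transcritical_point a c m ltac:(lra)) as Hslope.
  rewrite Hdu, Rmult_0_r in Hslope. lra.
Qed.
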